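(* Let $X$ be a Minkowski plane and let $A=\{\mathbf{x}_0,\mathbf{x}_1,\dots,\mathbf{x}_{2k-1}\}\subset X$ (distinct points). Suppose that $\mathbf{x}_0\in\mathrm{FT}(A)$ and that $\mathbf{x}_0$ is a vertex of $\operatorname{conv}A$. Then $A$ is a pseudo double cluster with $\mathbf{x}_0$ as centre.
   Context: A Minkowski plane is a two-dimensional real normed space $(X,\|\cdot\|)$ with unit ball $B$. A proper exposed face of $B$ is the intersection of $B$ with a supporting line of $B$. For finite $A\subset X$, a Fermat-Torricelli (FT) point of $A$ is a minimizer of $\mathbf{x}\mapsto\sum_{\mathbf{a}\in A}\|\mathbf{x}-\mathbf{a}\|$, and $\mathrm{FT}(A)$ is the set of all FT points. A set $C=\{\mathbf{x}_1,\dots,\mathbf{x}_m,\mathbf{y}_1,\dots,\mathbf{y}_m\}$ is a double cluster with pairs $\mathbf{x}_i,\mathbf{y}_i$ if all unit vectors $\frac{\mathbf{x}_i-\mathbf{y}_i}{\|\mathbf{x}_i-\mathbf{y}_i\|}$ lie in the same proper exposed face of $B$. A set $A$ is a pseudo double cluster if $A$ is the union of a double cluster $C$, an FT point of $C$ (called the centre of the pseudo double cluster), and one further arbitrary point. *)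

From HB Require Import structures.
From mathcomp Require Import all_boot all_order all_algebra.
From mathcomp Require Import reals.
Set Implicit Arguments. Unset Strict Implicit. Unset Printing Implicit Defensive.
Import Order.TTheory GRing.Theory Num.Theory.
Local Open Scope ring_scope.

Section Minkowski.
Variable R : realType.
Notation pt := 'rV[R]_2.

(* N is a norm on the 2-dimensional real vector space R^2; every Minkowski
   plane is linearly isometric to such a space (R^2, N). *)
Definition is_norm (N : pt -> R) : Prop :=
  [/\ forall x, N x = 0 -> x = 0,
      forall (a : R) x, N (a *: x) = `|a| * N x
    & forall x y, N (x + y) <= N x + N y].

(* standard bilinear pairing, used to represent linear functionals *)
Definition dotp (u v : pt) : R := \sum_(i < 2) u 0 i * v 0 i.

Definition unit_ball (N : pt -> R) (z : pt) : Prop := N z <= 1.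

Definition proper_exposed_face (N : pt -> R) (F : pt -> Prop) : Prop :=
  exists (u : pt) (c : R),
    [/\ u != 0,
        (forall z, unit_ball N z -> dotp u z <= c),
        (exists z, unit_ball N z /\ dotp u z = c)
      & forall z, F z <-> (unit_ball N z /\ dotp u z = c)].

Definition FT_point (N : pt -> R) (A : seq pt) (x : pt) : Prop :=
  forall y, \sum_(a <- A) N (x - a) <= \sum_(a <- A) N (y - a).

Definition in_conv (A : seq pt) (x : pt) : Prop :=
  exists w : 'I_(size A) -> R,
    [/\ forall i, 0 <= w i, \sum_i w i = 1
      & x = \sum_i w i *: nth 0 A i].

Definition vertex_of_conv (A : seq pt) (x : pt) : Prop :=
  in_conv A x /\
  forall y z (t : R), in_conv A y -> in_conv A z -> 0 < t < 1 ->
    x = (1 - t) *: y + t *: z -> y = z.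

Definition cluster_points (m : nat) (xs ys : 'I_m -> pt) : seq pt :=
  [seq xs i | i <- enum 'I_m] ++ [seq ys i | i <- enum 'I_m].

Definition double_cluster (N : pt -> R) (m : nat) (xs ys : 'I_m -> pt) : Prop :=
  uniq (cluster_points xs ys) /\
  exists F, proper_exposed_face N F /\
    forall i, F ((N (xs i - ys i))^-1 *: (xs i - ys i)).

Definition pseudo_double_cluster (N : pt -> R) (A : seq pt) (c : pt) : Prop :=
  exists (m : nat) (xs ys : 'I_m -> pt) (p : pt),
    [/\ double_cluster N xs ys,
        FT_point N (cluster_points xs ys) c
      & forall z, z \in A <-> [\/ z \in cluster_points xs ys, z = c | z = p]].

End Minkowski.

(* Since x0 is a vertex of conv A, the directions v_j = x0 - a_j of the other
   points lie in an open half-plane; number them by angle, j < 2k-1.  Pushing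
   x0 slightly towards the middle point a_(k-1) does not decrease the
   Fermat-Torricelli sum, while each pair (a_(k-1-i), a_(k-1+i)) can only get
   closer; so every pair is tight, and tightness of the innermost pair means
   that the unit vectors of v_(k-2) and -v_k span a segment of the unit
   circle.  The functional G supporting the unit ball along that segment equals
   the norm on the cone they span, which contains v_j for j < k-1 and -v_j for
   j > k-1.  Hence for the pairs (a_j, a_(k+j)), j < k-1, x0 lies metrically
   between the two points and their difference lies in the face {G = 1}: they
   form a double cluster with FT point x0, and a_(k-1) is the extra point. *)

From HB Require Import structures.
From mathcomp Require Import all_boot all_order all_algebra.
From mathcomp Require Import reals classical_sets.
From mathcomp Require Import ring lra zify.
Set Implicit Arguments. Unset Strict Implicit. Unset Printing Implicit Defensive.
Import Order.TTheory GRing.Theory Num.Theory.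
Local Open Scope ring_scope.
Local Open Scope classical_set_scope.

Lemma row2_eq (T : Type) (z w : 'rV[T]_2) : z 0 0 = w 0 0 -> z 0 1 = w 0 1 -> z = w.
Proof.
move=> h0 h1; apply/rowP => -[[|[|//]] j2].
- by rewrite (_ : Ordinal j2 = 0) //; apply/val_inj.
- by rewrite (_ : Ordinal j2 = 1) //; apply/val_inj.
Qed.

Section Cross.
Variable R : comPzRingType.
Implicit Types a b c : 'rV[R]_2.

Definition cross a b : R := a 0 0 * b 0 1 - a 0 1 * b 0 0.

Definition row2 (x y : R) : 'rV[R]_2 := \row_(j < 2) if j == 0 :> nat then x else y.

Lemma row2_0 x y : row2 x y 0 0 = x. Proof. by rewrite mxE. Qed.
Lemma row2_1 x y : row2 x y 0 1 = y. Proof. by rewrite mxE. Qed.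

Lemma crossC a b : cross b a = - cross a b.
Proof. by rewrite /cross; ring. Qed.

Lemma crossZl a b (x : R) : cross (x *: a) b = x * cross a b.
Proof. by rewrite /cross !mxE; ring. Qed.

Lemma crossZr a b (x : R) : cross a (x *: b) = x * cross a b.
Proof. by rewrite /cross !mxE; ring. Qed.

Lemma crossNl a b : cross (- a) b = - cross a b.
Proof. by rewrite /cross !mxE; ring. Qed.

Lemma cross_scale_decomp a b c : cross a b *: c = cross c b *: a + cross a c *: b.
Proof. by apply: row2_eq; rewrite !mxE /cross; ring. Qed.

End Cross.

Section CrossField.
Variable R : fieldType.

Lemma cross_decomp (a b c : 'rV[R]_2) : cross a b != 0 ->
  c = (cross c b / cross a b) *: a + (cross a c / cross a b) *: b.
Proof.
move=> hab; rewrite -{1}[c](scalerK hab) cross_scale_decomp scalerDr !scalerA.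
by congr (_ *: _ + _ *: _); rewrite mulrC.
Qed.

End CrossField.

Section PlaneCones.
Variable R : realType.
Implicit Types a b c f u v w : 'rV[R]_2.

Lemma dotpE u v : dotp u v = u 0 0 * v 0 0 + u 0 1 * v 0 1.
Proof.
rewrite /dotp big_ord_recr big_ord1 /=.
by congr (_ * _ + _ * _); congr (_ _ _); apply/val_inj.
Qed.

Lemma dotpZr f (x : R) u : dotp f (x *: u) = x * dotp f u.
Proof. by rewrite !dotpE !mxE; ring. Qed.

Lemma dotpDr f u v : dotp f (u + v) = dotp f u + dotp f v.
Proof. by rewrite !dotpE !mxE; ring. Qed.

Lemma dotpNr f u : dotp f (- u) = - dotp f u.
Proof. by rewrite !dotpE !mxE; ring. Qed.

Lemma dotpp_gt0 u : u != 0 -> 0 < dotp u u.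
Proof.
move=> u0; rewrite dotpE lt_neqAle -!expr2 addr_ge0 ?sqr_ge0 // andbT.
apply: contra u0; rewrite eq_sym paddr_eq0 ?sqr_ge0 // !sqrf_eq0 => /andP[/eqP h0 /eqP h1].
by apply/eqP/row2_eq; rewrite ?h0 ?h1 mxE.
Qed.

Lemma cross_eq0_parallel f a c : dotp f a != 0 -> cross a c = 0 ->
  c = (dotp f c / dotp f a) *: a.
Proof.
move=> fa0 ac0.
have E : dotp f a *: c = dotp f c *: a + cross a c *: row2 (- f 0 1) (f 0 0).
  by apply: row2_eq; rewrite !dotpE !mxE /cross /=; ring.
by rewrite -{1}[c](scalerK fa0) E ac0 scale0r addr0 scalerA mulrC.
Qed.

Lemma dotp_basis u e (p q : R) : cross u e != 0 ->
  exists G : 'rV[R]_2, dotp G u = p /\ dotp G e = q.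
Proof.
move=> ue; exists (row2 ((p * e 0 1 - q * u 0 1) / cross u e)
                    ((q * u 0 0 - p * e 0 0) / cross u e)).
by rewrite !dotpE !row2_0 !row2_1 /cross in ue *; split; field.
Qed.

(* On the half-plane [0 < dotp f a], [slope f a] increases with the angle from [f]. *)
Definition slope f a := cross f a / dotp f a.

Lemma slope_le_cross_ge0 f a b : 0 < dotp f a -> 0 < dotp f b ->
  slope f a <= slope f b -> 0 <= cross a b.
Proof.
move=> fa fb; rewrite -subr_ge0 => hsl.
have f0 : f != 0 by apply: contraTneq fa => ->; rewrite dotpE !mxE !mul0r addr0 ltxx.
have E : dotp f a * dotp f b * (slope f b - slope f a) = dotp f f * cross a b.
  transitivity (dotp f a * cross f b - cross f a * dotp f b).
    by rewrite /slope; field; rewrite !gt_eqF.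
  by rewrite !dotpE /cross; ring.
by rewrite -(pmulr_rge0 _ (dotpp_gt0 f0)) -E mulr_ge0 // mulr_ge0 // ltW.
Qed.

Definition in_cone a b w := exists p q : R, [/\ 0 <= p, 0 <= q & w = p *: a + q *: b].

Lemma in_cone_cross_ge0 a b c : 0 < cross a b -> 0 <= cross a c -> 0 <= cross c b ->
  in_cone a b c.
Proof.
move=> ab ac cb; exists (cross c b / cross a b), (cross a c / cross a b).
by split; [exact: divr_ge0 cb (ltW ab) | exact: divr_ge0 ac (ltW ab)
          | exact/cross_decomp/lt0r_neq0].
Qed.

Lemma in_cone_cross f a b c : 0 < dotp f a -> 0 < dotp f b -> 0 < dotp f c ->
  0 <= cross a c -> 0 <= cross c b -> in_cone a b c.
Proof.
move=> fa fb fc ac cb.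
have E : cross a b * dotp f c = cross c b * dotp f a + cross a c * dotp f b.
  by rewrite !dotpE /cross; ring.
have [ab0|ab0] := eqVneq (cross a b) 0.
- have ac0 : cross a c = 0.
    have := mulr_ge0 cb (ltW fa); have := mulr_ge0 ac (ltW fb).
    rewrite ab0 mul0r in E => h1 h2.
    have /eqP : cross a c * dotp f b = 0 by lra.
    by rewrite mulf_eq0 (gt_eqF fb) orbF => /eqP.
  exists (dotp f c / dotp f a), 0; split=> //; first exact: divr_ge0 (ltW fc) (ltW fa).
  by rewrite scale0r addr0 -cross_eq0_parallel ?gt_eqF.
- apply: in_cone_cross_ge0 => //.
  rewrite lt_neqAle eq_sym ab0 -(pmulr_lge0 _ fc) E.
  by rewrite addr_ge0 // mulr_ge0 // ltW.
Qed.

End PlaneCones.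

Section HalfPlane.
Variable R : realType.
Local Notation pt := 'rV[R]_2.
Implicit Types (a b u v w : pt) (l : seq pt).

(* Repetitions are allowed: [u = w] covers two opposite directions [v = - c u]. *)
Definition positively_dependent l := exists u v w (a b c : R),
  [/\ u \in l, v \in l & w \in l] /\ [/\ 0 < a, 0 < b, 0 < c & a *: u + b *: v + c *: w = 0].

Definition pointed_cone l :=
  (exists a, a \in l /\ {in l, forall w, exists2 c : R, 0 < c & w = c *: a}) \/
  (exists a b, [/\ a \in l, b \in l, 0 < cross a b & {in l, forall w, in_cone a b w}]).

Lemma positively_dependent_cons v l :
  positively_dependent l -> positively_dependent (v :: l).
Proof.
move=> [u [u' [w [a [b [c [[hu hu' hw] H]]]]]]].
by exists u, u', w, a, b, c; split=> //; rewrite !inE hu hu' hw !orbT.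
Qed.

Lemma positively_dependent_opp l u v (c : R) : u \in l -> v \in l -> c < 0 ->
  v = c *: u -> positively_dependent l.
Proof.
move=> hu hv c0 vE; exists u, v, u, (- c / 2), 1, (- c / 2).
split; first by split.
split; [lra | exact: ltr01 | lra |].
by rewrite vE; apply: row2_eq; rewrite !mxE; field.
Qed.

Lemma in_cone_sub a b c d w : in_cone c d a -> in_cone c d b -> in_cone a b w ->
  in_cone c d w.
Proof.
move=> [pa [qa [pa0 qa0 ->]]] [pb [qb [pb0 qb0 ->]]] [p [q [p0 q0 ->]]].
exists (p * pa + q * pb), (p * qa + q * qb).
split; rewrite ?addr_ge0 ?mulr_ge0 //.
by apply: row2_eq; rewrite !mxE; ring.
Qed.

Lemma in_cone_l a b : in_cone a b a.
Proof. by exists 1, 0; rewrite scale1r scale0r addr0 ler01 lexx. Qed.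

Lemma in_cone_r a b : in_cone a b b.
Proof. by exists 0, 1; rewrite scale1r scale0r add0r ler01 lexx. Qed.

Lemma pointed_cone_cons_ray v l a : 0 \notin v :: l -> a \in l ->
  {in l, forall w, exists2 c : R, 0 < c & w = c *: a} ->
  pointed_cone (v :: l) \/ positively_dependent (v :: l).
Proof.
move=> l0 al ray.
have a0 : a != 0 by apply: contraNneq l0 => <-; rewrite inE al orbT.
have v0 : v != 0 by apply: contraNneq l0 => <-; rewrite inE eqxx.
have [av|av|av] := ltgtP 0 (cross a v).
- left; right; exists a, v; split; rewrite ?inE ?al ?eqxx ?orbT //.
  move=> w; rewrite inE => /predU1P [->|/ray [c c0 ->]]; first exact: in_cone_r.
  by exists c, 0; rewrite scale0r addr0 (ltW c0).
- left; right; exists v, a; split; rewrite ?inE ?al ?eqxx ?orbT //.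
    by rewrite crossC oppr_gt0.
  move=> w; rewrite inE => /predU1P [->|/ray [c c0 ->]]; first exact: in_cone_l.
  by exists 0, c; rewrite scale0r add0r (ltW c0).
- have := cross_eq0_parallel (lt0r_neq0 (dotpp_gt0 a0)) (esym av).
  set c := _ / _ => vE; have [c0|c0|c0] := ltgtP 0 c.
  + left; left; exists a; split; rewrite ?inE ?al ?orbT //.
    by move=> w; rewrite inE => /predU1P [->|/ray //]; exists c.
  + by right; apply: (@positively_dependent_opp _ a v c); rewrite ?inE ?al ?eqxx ?orbT.
  + by move: v0; rewrite vE -c0 scale0r eqxx.
Qed.

Lemma pointed_cone_cons_sector v l a b : 0 \notin v :: l -> a \in l -> b \in l ->
  0 < cross a b -> {in l, forall w, in_cone a b w} ->
  pointed_cone (v :: l) \/ positively_dependent (v :: l).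
Proof.
move=> l0 al bl ab sector.
have mem_vl w : w \in l -> w \in v :: l by move=> wl; rewrite inE wl orbT.
have ab0 := ltW ab.
have vE := cross_decomp v (lt0r_neq0 ab).
set p := cross a v in vE; set q := cross v b in vE.
have [p0|p0] := lerP 0 p; have [q0|q0] := lerP 0 q.
- left; right; exists a, b; split; rewrite ?mem_vl //.
  by move=> w; rewrite inE => /predU1P [->|/sector //]; apply: in_cone_cross_ge0.
- have [p0'|p0'] := eqVneq p 0.
    right; apply: (@positively_dependent_opp _ a v (q / cross a b)).
    + exact: mem_vl.
    + by rewrite inE eqxx.
    + by rewrite pmulr_llt0 ?invr_gt0.
    + by rewrite vE p0' mul0r scale0r addr0.
  have ap : 0 < p by rewrite lt_neqAle eq_sym p0'.
  left; right; exists a, v; split; [exact: mem_vl | by rewrite inE eqxx | done |].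
  move=> w; rewrite inE => /predU1P [->|/sector]; first exact: in_cone_r.
  apply: in_cone_sub; first exact: in_cone_l.
  by apply: in_cone_cross_ge0; rewrite // crossC oppr_ge0 ltW.
- have [q0'|q0'] := eqVneq q 0.
    right; apply: (@positively_dependent_opp _ b v (p / cross a b)).
    + exact: mem_vl.
    + by rewrite inE eqxx.
    + by rewrite pmulr_llt0 ?invr_gt0.
    + by rewrite vE q0' mul0r scale0r add0r.
  have qp : 0 < q by rewrite lt_neqAle eq_sym q0'.
  left; right; exists v, b; split; [by rewrite inE eqxx | exact: mem_vl | done |].
  move=> w; rewrite inE => /predU1P [->|/sector]; first exact: in_cone_l.
  apply: in_cone_sub; last exact: in_cone_r.
  by apply: in_cone_cross_ge0; rewrite // crossC oppr_ge0 ltW.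
- right; exists a, b, v, (- q), (- p), (cross a b); split.
    by split; [exact: mem_vl | exact: mem_vl | rewrite inE eqxx].
  split; rewrite ?oppr_gt0 //.
  by rewrite [in X in _ + X]vE; apply: row2_eq; rewrite !mxE; field; rewrite lt0r_neq0.
Qed.

Lemma pointed_cone_or_positively_dependent l : l != [::] -> 0 \notin l ->
  pointed_cone l \/ positively_dependent l.
Proof.
elim: l => [//|v l IH] _ l0.
have [->|ln] := eqVneq l [::].
  left; left; exists v; split; first by rewrite inE.
  by move=> w; rewrite inE => /eqP ->; exists 1; rewrite ?scale1r ?ltr01.
have l0' : 0 \notin l by apply: contra l0; rewrite inE => ->; rewrite orbT.
case: (IH ln l0') => [[[a [al ray]] | [a [b [al bl ab sector]]]] | pd].
- exact: pointed_cone_cons_ray al ray.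
- exact: pointed_cone_cons_sector al bl ab sector.
- by right; apply: positively_dependent_cons.
Qed.

Lemma pointed_cone_half_plane l : 0 \notin l -> pointed_cone l ->
  exists f : pt, {in l, forall w, 0 < dotp f w}.
Proof.
move=> l0 [[a [al ray]] | [a [b [al bl ab sector]]]].
  have a0 : a != 0 by apply: contraNneq l0 => <-.
  by exists a => w /ray [c c0 ->]; rewrite dotpZr mulr_gt0 // dotpp_gt0.
exists (row2 (b 0 1 - a 0 1) (a 0 0 - b 0 0)) => w wl.
have w0 : w != 0 by apply: contraNneq l0 => <-.
have [p [q [p0 q0 wE]]] := sector w wl.
have -> : dotp (row2 (b 0 1 - a 0 1) (a 0 0 - b 0 0)) w = (p + q) * cross a b.
  by rewrite wE dotpE row2_0 row2_1 !mxE /cross; ring.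
rewrite pmulr_lgt0 // lt_neqAle addr_ge0 // andbT eq_sym.
apply: contra w0 => /eqP pq0; have [p0' q0'] : p = 0 /\ q = 0 by lra.
by rewrite wE p0' q0' !scale0r addr0.
Qed.

Lemma half_plane_or_positively_dependent l : 0 \notin l ->
  (exists f : pt, {in l, forall w, 0 < dotp f w}) \/ positively_dependent l.
Proof.
move=> l0; have [->|ln] := eqVneq l [::]; first by left; exists 0.
case: (pointed_cone_or_positively_dependent ln l0) => [cone|]; last by right.
by left; apply: pointed_cone_half_plane.
Qed.

Lemma mem_in_conv (A : seq pt) a : a \in A -> in_conv A a.
Proof.
rewrite -index_mem => ai; pose i0 := Ordinal ai.
exists (fun i => (i == i0)%:R); split.
- by move=> i; rewrite ler0n.
- by rewrite (bigD1 i0) //= eqxx big1 ?addr0 // => i /negbTE ->.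
- rewrite (bigD1 i0) //= eqxx scale1r big1 ?addr0 ?nth_index -?index_mem //.
  by move=> i /negbTE ->; rewrite scale0r.
Qed.

Lemma in_conv_segment (A : seq pt) y z (t : R) : in_conv A y -> in_conv A z ->
  0 <= t <= 1 -> in_conv A ((1 - t) *: y + t *: z).
Proof.
move=> [wy [wy0 wy1 ->]] [wz [wz0 wz1 ->]] /andP [t0 t1].
exists (fun i => (1 - t) * wy i + t * wz i); split.
- by move=> i; rewrite addr_ge0 // mulr_ge0 // subr_ge0.
- by rewrite big_split /= -!mulr_sumr wy1 wz1; ring.
- rewrite !scaler_sumr -big_split /=; apply: eq_bigr => i _.
  by rewrite !scalerA -scalerDl.
Qed.

(* A vanishing positive combination [a u + b v + c w = 0] exhibits [x0] as an
   interior point of the segment from [x0 - w] to a point of [[x0 - u, x0 - v]]. *)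
Lemma vertex_not_positively_dependent (A : seq pt) x0 l : vertex_of_conv A x0 ->
  0 \notin l -> {in l, forall v, x0 - v \in A} -> ~ positively_dependent l.
Proof.
move=> [_ vx] l0 lA [u [v [w [a [b [c [[ul vl wl] [a0 b0 c0 E]]]]]]]].
have w0 : w != 0 by apply: contraNneq l0 => <-.
set y := (1 - b / (a + b)) *: (x0 - u) + b / (a + b) *: (x0 - v).
have yA : in_conv A y.
  apply: in_conv_segment; [exact/mem_in_conv/lA | exact/mem_in_conv/lA |].
  by rewrite divr_ge0 ?ler_pdivrMr /=; lra.
have t01 : 0 < c / (a + b + c) < 1 by rewrite divr_gt0 ?ltr_pdivrMr /=; lra.
have cw : c *: w = - (a *: u + b *: v) by apply/eqP; rewrite -addr_eq0 addrC E.
have x0E : x0 = (1 - c / (a + b + c)) *: y + c / (a + b + c) *: (x0 - w).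
  rewrite /y -[w](scalerK (lt0r_neq0 c0)) cw.
  by apply: row2_eq; rewrite !mxE; field; rewrite !lt0r_neq0 /=; lra.
have yw := vx _ _ _ yA (mem_in_conv (lA _ wl)) t01 x0E.
move: x0E; rewrite yw -scalerDl subrK scale1r => /eqP.
by rewrite -subr_eq0 opprB addrC subrK (negbTE w0).
Qed.

Lemma vertex_half_plane (A : seq pt) x0 : uniq A -> vertex_of_conv A x0 ->
  exists f : pt, {in rem x0 A, forall a, 0 < dotp f (x0 - a)}.
Proof.
move=> uA vx; set l := [seq x0 - a | a <- rem x0 A].
have l0 : 0 \notin l.
  apply/mapP => -[a]; rewrite mem_rem_uniq // inE => /andP [ax _] /eqP.
  by rewrite eq_sym subr_eq0 eq_sym (negbTE ax).
have lA : {in l, forall v, x0 - v \in A}.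
  by move=> _ /mapP [a + ->]; rewrite opprB addrC subrK => /mem_rem.
have [[f fl] | pd] := half_plane_or_positively_dependent l0.
  by exists f => a ar; apply/fl/map_f.
by case: (vertex_not_positively_dependent vx l0 lA pd).
Qed.

Lemma sorted_directions (x0 f : pt) (r : seq pt) :
  {in r, forall a, 0 < dotp f (x0 - a)} ->
  exists s : seq pt, [/\ perm_eq s r,
    forall j, (j < size s)%N -> 0 < dotp f (x0 - nth 0 s j)
    & forall i j, (i <= j < size s)%N -> 0 <= cross (x0 - nth 0 s i) (x0 - nth 0 s j)].
Proof.
move=> pos; pose le_slope a b := slope f (x0 - a) <= slope f (x0 - b).
have tot : total le_slope by move=> a b; apply: le_total.
have tr : transitive le_slope by move=> a b c; apply: le_trans.
have perm_s : perm_eq (sort le_slope r) r by rewrite perm_sort.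
exists (sort le_slope r).
have pos_s j : (j < size (sort le_slope r))%N -> 0 < dotp f (x0 - nth 0 (sort le_slope r) j).
  by move=> js; apply: pos; rewrite -(perm_mem perm_s) mem_nth.
split=> // i j /andP [ij js]; apply: (@slope_le_cross_ge0 _ f); rewrite ?pos_s //.
  exact: leq_ltn_trans js.
apply: (sorted_leq_nth tr (fun a => lexx _) 0 (sort_sorted tot r)) => //.
by rewrite inE (leq_ltn_trans ij js).
Qed.

End HalfPlane.

Lemma big_seq_halves (V : nmodType) (T : Type) (x : T) (s : seq T) K (F : T -> V) :
  size s = (K.+1 + K)%N ->
  \sum_(a <- s) F a =
  F (nth x s K) + \sum_(i < K) (F (nth x s (K - i.+1)) + F (nth x s (K.+1 + i))).
Proof.
move=> sz; rewrite (big_nth x) sz (@big_cat_nat _ _ _ K) //=; last by lia.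
rewrite (@big_ltn _ _ _ K); last by lia.
rewrite -{1}(add0n K.+1) big_addn addKn big_nat_rev /= add0n addrCA; congr (_ + _).
rewrite -big_split /= big_mkord; apply: eq_bigr => i _.
by rewrite addnC.
Qed.

Lemma big_cluster_points (R : realType) (V : nmodType) m (xs ys : 'I_m -> 'rV[R]_2)
    (F : 'rV[R]_2 -> V) :
  \sum_(a <- cluster_points xs ys) F a = \sum_i (F (xs i) + F (ys i)).
Proof. by rewrite big_cat !big_map big_split /= -!big_enum. Qed.

Section Halves.
Variable R : realType.
Local Notation pt := 'rV[R]_2.
Variables (s : seq pt) (K : nat).
Hypothesis size_s : size s = (K.+1 + K)%N.

Definition lower_half (i : 'I_K) := nth 0 s i.
Definition upper_half (i : 'I_K) := nth 0 s (K.+1 + i).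

Lemma uniq_cluster_halves : uniq s -> uniq (cluster_points upper_half lower_half).
Proof.
move=> us; have lt_s n : (n < K)%N -> (n < size s)%N /\ (K.+1 + n < size s)%N.
  by rewrite size_s; lia.
rewrite cat_uniq !map_inj_uniq ?index_enum_uniq ?andbT //=.
- apply/hasPn => _ /mapP [i _ ->]; apply/mapP => -[j _] /eqP.
  have [i1 i2] := lt_s _ (ltn_ord i); have [j1 j2] := lt_s _ (ltn_ord j).
  by rewrite nth_uniq //; lia.
- move=> i j /eqP; have [i1 _] := lt_s _ (ltn_ord i); have [j1 _] := lt_s _ (ltn_ord j).
  by rewrite nth_uniq // => /eqP /val_inj.
- move=> i j /eqP; have [_ i2] := lt_s _ (ltn_ord i); have [_ j2] := lt_s _ (ltn_ord j).
  by rewrite nth_uniq // eqn_add2l => /eqP /val_inj.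
Qed.

Lemma mem_cluster_halves z :
  (z \in s) = (z \in cluster_points upper_half lower_half) || (z == nth 0 s K).
Proof.
apply/idP/idP => [zs | /orP [|/eqP ->]]; last by rewrite mem_nth // size_s; lia.
  rewrite -(nth_index 0 zs); have := index_mem z s; rewrite zs size_s.
  move: (index z s) => j js; rewrite mem_cat.
  have [jK|Kj|->] := ltngtP j K; last by rewrite eqxx orbT.
  - by apply/orP; left; apply/orP; right; apply/mapP; exists (Ordinal jK); rewrite ?mem_enum.
  - have jK' : (j - K.+1 < K)%N by lia.
    apply/orP; left; apply/orP; left; apply/mapP; exists (Ordinal jK'); rewrite ?mem_enum //.
    by rewrite /upper_half /= subnKC.
by rewrite mem_cat => /orP [] /mapP [i _ ->]; apply: mem_nth; rewrite size_s; have := ltn_ord i; lia.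
Qed.

End Halves.

Section NormedPlane.
Variable R : realType.
Local Notation pt := 'rV[R]_2.
Variable N : pt -> R.
Hypothesis normP : is_norm N.
Implicit Types (a b u v w x y z : pt).

Lemma normZ (c : R) v : N (c *: v) = `|c| * N v.
Proof. by case: normP. Qed.

Lemma normD_le u v : N (u + v) <= N u + N v.
Proof. by case: normP. Qed.

Lemma norm0 : N 0 = 0.
Proof. by rewrite -(scale0r 0) normZ normr0 mul0r. Qed.

Lemma normN v : N (- v) = N v.
Proof. by rewrite -scaleN1r normZ normrN normr1 mul1r. Qed.

Lemma norm_ge0 v : 0 <= N v.
Proof. by have := normD_le v (- v); rewrite subrr norm0 normN; lra. Qed.

Lemma norm_gt0 v : v != 0 -> 0 < N v.
Proof.
move=> v0; rewrite lt_neqAle norm_ge0 andbT eq_sym.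
by apply: contra v0 => /eqP; case: normP => + _ _ => /[apply] ->.
Qed.

Definition normalize v := (N v)^-1 *: v.

Lemma norm_normalize v : v != 0 -> N (normalize v) = 1.
Proof. by move=> v0; rewrite normZ ger0_norm ?invr_ge0 ?norm_ge0 // mulVf ?gt_eqF ?norm_gt0. Qed.

Lemma normalizeK v : v != 0 -> N v *: normalize v = v.
Proof. by move=> v0; rewrite /normalize scalerA mulfV ?scale1r ?gt_eqF ?norm_gt0. Qed.

Lemma normalizeZ (c : R) v : 0 < c -> normalize (c *: v) = normalize v.
Proof.
move=> c0; rewrite /normalize normZ gtr0_norm // scalerA invfM mulrAC mulVf ?mul1r //.
exact: lt0r_neq0.
Qed.

(* Two-dimensional Hahn–Banach: with [e] a vector independent of [u], the slope
   [s = G e] must lie between [sup_a (a - N (a u - e))] and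
   [inf_a (N (a u + e) - a)], which are separated by the triangle inequality. *)
Lemma norming_functional u : N u = 1 ->
  exists G : pt, (forall z, dotp G z <= N z) /\ dotp G u = 1.
Proof.
move=> u1; have u0 : u != 0 by apply: contra_eq_neq u1 => ->; rewrite norm0 eq_sym oner_neq0.
set e := row2 (- u 0 1) (u 0 0).
have ue : 0 < cross u e.
  by have := dotpp_gt0 u0; rewrite dotpE /cross row2_0 row2_1; lra.
have sep (a a' : R) : a - N (a *: u - e) <= N (a' *: u + e) - a'.
  have := normD_le (a *: u - e) (a' *: u + e).
  rewrite addrACA addNr addr0 -scalerDl normZ u1 mulr1; have := ler_norm (a + a'); lra.
pose E := [set x : R | exists a : R, x = a - N (a *: u - e)].
have supE : has_sup E.
  by split; [exists (0 - N (0 *: u - e)), 0 | exists (N (0 *: u + e) - 0) => _ [a ->]].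
pose s := sup E.
have s_ge (a : R) : a - N (a *: u - e) <= s by apply: sup_upper_bound => //; exists a.
have s_le (a : R) : s <= N (a *: u + e) - a by apply: ge_sup; [case: supE | move=> _ [a' ->]].
have [G [Gu Ge]] := dotp_basis 1 s (lt0r_neq0 ue).
exists G; split=> // z; rewrite (cross_decomp z (lt0r_neq0 ue)).
move: (cross z e / _) (cross u z / _) => a b.
rewrite dotpDr !dotpZr Gu Ge mulr1.
have [b0|b0|->] := ltgtP b 0; last by rewrite scale0r addr0 normZ u1 !mulr1 mul0r addr0 ler_norm.
- have -> : a *: u + b *: e = (- b) *: ((a / - b) *: u - e).
    by rewrite scalerBr scalerA mulrC divfK ?oppr_eq0 ?lt_eqF // scaleNr opprK.
  rewrite normZ gtr0_norm ?oppr_gt0 //; have := s_ge (a / - b).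
  rewrite -(ler_pM2l (_ : 0 < - b)) ?oppr_gt0 // mulrBr (mulrC (- b)) divfK ?oppr_eq0 ?lt_eqF //.
  lra.
- have -> : a *: u + b *: e = b *: ((a / b) *: u + e).
    by rewrite scalerDr scalerA mulrC divfK ?gt_eqF.
  rewrite normZ gtr0_norm //; have := s_le (a / b).
  rewrite -(ler_pM2l b0) mulrBr (mulrC b (a / b)) divfK ?gt_eqF //.
  lra.
Qed.

Definition unit_segment x y := [/\ N x = 1, N y = 1 & N (x + y) = 2].

Lemma unit_segment_normD_ge x y (a b : R) : unit_segment x y ->
  a + b <= N (a *: x + b *: y).
Proof.
case=> x1 y1 xy2; have := norm_ge0 (a *: x + b *: y).
have [ab|ba] := lerP a b.
- have [b0|] := lerP 0 b; last lra.
  have := normD_le (a *: x + b *: y) ((b - a) *: x).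
  have -> : a *: x + b *: y + (b - a) *: x = b *: (x + y).
    by apply: row2_eq; rewrite !mxE; ring.
  rewrite !normZ x1 xy2 (ger0_norm b0).
  rewrite ger0_norm ?subr_ge0 //; lra.
- have [a0|] := lerP 0 a; last lra.
  have := normD_le (a *: x + b *: y) ((a - b) *: y).
  have -> : a *: x + b *: y + (a - b) *: y = a *: (x + y).
    by apply: row2_eq; rewrite !mxE; ring.
  rewrite !normZ y1 xy2 (ger0_norm a0).
  rewrite ger0_norm ?subr_ge0 ?(ltW ba) //; lra.
Qed.

Lemma unit_segment_normD x y (a b : R) : unit_segment x y -> 0 <= a -> 0 <= b ->
  N (a *: x + b *: y) = a + b.
Proof.
move=> xy a0 b0; apply/eqP; rewrite eq_le unit_segment_normD_ge // andbT.
by case: xy => x1 y1 _; have := normD_le (a *: x) (b *: y); rewrite !normZ x1 y1 !mulr1 !ger0_norm.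
Qed.

Lemma unit_segment_of_tight x y (a b : R) : N x = 1 -> N y = 1 -> 0 < a -> 0 < b ->
  N (a *: x - b *: y) = a + b -> unit_segment x (- y).
Proof.
move=> x1 y1 a0 b0 tight; split; rewrite ?normN //.
apply/eqP; rewrite eq_le; apply/andP; split.
  by have := normD_le x (- y); rewrite normN; lra.
have [ab|ba] := lerP a b.
- have := normD_le (a *: (x - y)) (- ((b - a) *: y)).
  have -> : a *: (x - y) + - ((b - a) *: y) = a *: x - b *: y.
    by apply: row2_eq; rewrite !mxE; ring.
  rewrite tight normN !normZ y1.
  rewrite (gtr0_norm a0) ger0_norm ?subr_ge0 // => h.
  by rewrite -(ler_pM2l a0); lra.
- have := normD_le (b *: (x - y)) ((a - b) *: x).
  have -> : b *: (x - y) + (a - b) *: x = a *: x - b *: y.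
    by apply: row2_eq; rewrite !mxE; ring.
  rewrite tight !normZ x1.
  rewrite (gtr0_norm b0) ger0_norm ?subr_ge0 ?(ltW ba) // => h.
  by rewrite -(ler_pM2l b0); lra.
Qed.

Lemma unit_segment_functional x y : unit_segment x y -> 0 < cross x y ->
  exists G : pt, [/\ forall z, dotp G z <= N z, dotp G x = 1
                  & forall z, in_cone x y z -> dotp G z = N z].
Proof.
move=> xy /lt0r_neq0 xy0; have [G [Gx Gy]] := dotp_basis 1 1 xy0.
have GE (a b : R) : dotp G (a *: x + b *: y) = a + b.
  by rewrite dotpDr !dotpZr Gx Gy !mulr1.
exists G; split=> //.
  by move=> z; rewrite (cross_decomp z xy0) GE unit_segment_normD_ge.
by move=> _ [a [b [a0 b0 ->]]]; rewrite GE unit_segment_normD.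
Qed.

Lemma unit_segment_sym x y : unit_segment x y -> unit_segment y x.
Proof. by case=> x1 y1 xy; split; rewrite // addrC. Qed.

Lemma unit_segment_swap x y : unit_segment x (- y) -> unit_segment y (- x).
Proof.
case=> x1 y1 xy; split; first by rewrite -normN.
  by rewrite normN.
by rewrite -xy -normN opprD opprK addrC.
Qed.

Lemma normB_shift a b (lam mu t : R) : 0 <= t * mu -> t * lam <= 1 ->
  N (a - t *: (lam *: a + mu *: b)) <= (1 - t * lam) * N a + t * mu * N b.
Proof.
move=> tmu tlam; have -> : a - t *: (lam *: a + mu *: b) = (1 - t * lam) *: a + (- (t * mu)) *: b.
  by apply: row2_eq; rewrite !mxE; ring.
by apply: le_trans (normD_le _ _) _; rewrite !normZ normrN !ger0_norm ?subr_ge0.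
Qed.

Lemma pair_shift_le vl vr (lam mu t : R) : 0 <= lam -> 0 <= mu -> 0 <= t ->
  t * lam <= 1 -> t * mu <= 1 ->
  N (vl - t *: (lam *: vl + mu *: vr)) + N (vr - t *: (lam *: vl + mu *: vr)) <= N vl + N vr.
Proof.
move=> lam0 mu0 t0 tlam tmu.
have := normB_shift vl vr (mulr_ge0 t0 mu0) tlam.
have := normB_shift vr vl (mulr_ge0 t0 lam0) tmu.
rewrite (addrC (mu *: vr)) !mulrBl !mul1r; lra.
Qed.

(* Equality in [pair_shift_le] forces equality in the triangle inequality for
   [(1 - t lam) vl - t mu vr], i.e. a flat piece of the unit circle. *)
Lemma pair_shift_tight vl vr (lam mu t : R) : 0 <= lam -> 0 < mu -> 0 < t ->
  t * lam < 1 -> t * mu <= 1 -> vl != 0 -> vr != 0 ->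
  N vl + N vr <= N (vl - t *: (lam *: vl + mu *: vr)) + N (vr - t *: (lam *: vl + mu *: vr)) ->
  unit_segment (normalize vl) (- normalize vr).
Proof.
move=> lam0 mu0 t0 tlam tmu vl0 vr0 ge.
have b1 := normB_shift vl vr (mulr_ge0 (ltW t0) (ltW mu0)) (ltW tlam).
have := normB_shift vr vl (mulr_ge0 (ltW t0) lam0) tmu.
rewrite (addrC (mu *: vr)) => b2.
apply: (@unit_segment_of_tight _ _ ((1 - t * lam) * N vl) (t * mu * N vr)).
- exact: norm_normalize.
- exact: norm_normalize.
- by rewrite mulr_gt0 ?subr_gt0 ?norm_gt0.
- by rewrite !mulr_gt0 ?norm_gt0.
- rewrite -!scalerA !normalizeK //.
  have -> : (1 - t * lam) *: vl - t *: (mu *: vr) = vl - t *: (lam *: vl + mu *: vr).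
    by apply: row2_eq; rewrite !mxE; ring.
  rewrite !mulrBl !mul1r in b1 b2 *; lra.
Qed.

Lemma pair_shift_unit_segment vl vr (lam mu t : R) : 0 <= lam -> 0 <= mu -> 0 < lam + mu ->
  0 < t -> t * lam < 1 -> t * mu < 1 -> vl != 0 -> vr != 0 ->
  N vl + N vr <= N (vl - t *: (lam *: vl + mu *: vr)) + N (vr - t *: (lam *: vl + mu *: vr)) ->
  unit_segment (normalize vl) (- normalize vr).
Proof.
move=> lam0 mu0 lm0 t0 tlam tmu vl0 vr0 ge.
have [mup|mun] := ltrP 0 mu; first exact: pair_shift_tight lam0 mup t0 tlam (ltW tmu) vl0 vr0 ge.
have lamp : 0 < lam by lra.
apply/unit_segment_swap/(pair_shift_tight mu0 lamp t0 tmu (ltW tlam) vr0 vl0).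
by rewrite addrC (addrC (mu *: vr)) [X in _ <= X]addrC.
Qed.

Definition dual_unit G := (forall z, dotp G z <= N z) /\ exists z, N z <= 1 /\ dotp G z = 1.

Lemma ler_sum_tight (I : finType) (F G : I -> R) i0 : (forall i, F i <= G i) ->
  \sum_i G i <= \sum_i F i -> G i0 <= F i0.
Proof.
move=> FG; rewrite (bigD1 i0) //= [X in _ <= X](bigD1 i0) //=.
have : \sum_(i | i != i0) F i <= \sum_(i | i != i0) G i by apply: ler_sum => i _.
lra.
Qed.

Section Directions.
Variables (x0 f : pt) (s : seq pt) (K : nat).
Local Notation v j := (x0 - nth 0 s j).
Hypothesis size_s : size s = (K.+1 + K)%N.
Hypothesis dir_pos : forall j, (j < size s)%N -> 0 < dotp f (v j).
Hypothesis dir_sorted : forall i j, (i <= j < size s)%N -> 0 <= cross (v i) (v j).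
Hypothesis ft_s : forall y, \sum_(a <- s) N (x0 - a) <= N (y - x0) + \sum_(a <- s) N (y - a).

Lemma dir_neq0 j : (j < size s)%N -> v j != 0.
Proof. by move=> /dir_pos; apply: contraTneq => ->; rewrite dotpE !mxE !mulr0 addr0 ltxx. Qed.

Lemma middle_in_cone (i : 'I_K) : in_cone (v (K - i.+1)) (v (K.+1 + i)) (v K).
Proof.
have iK := ltn_ord i.
by apply: (@in_cone_cross _ f); rewrite ?dir_pos ?dir_sorted ?size_s //; lia.
Qed.

(* The Fermat–Torricelli inequality at the test point [x0 - t v_K]. *)
Lemma ft_pairs (t : R) : 0 <= t <= 1 ->
  \sum_(i < K) (N (v (K - i.+1)) + N (v (K.+1 + i))) <=
  \sum_(i < K) (N (v (K - i.+1) - t *: v K) + N (v (K.+1 + i) - t *: v K)).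
Proof.
move=> /andP [t0 t1]; have := ft_s (x0 - t *: v K).
rewrite !(big_seq_halves 0 _ size_s) addrAC subrr add0r normN normZ (ger0_norm t0).
have -> : x0 - t *: v K - nth 0 s K = (1 - t) *: v K.
  by apply: row2_eq; rewrite !mxE; ring.
rewrite normZ ger0_norm ?subr_ge0 //.
have shift j : x0 - t *: v K - nth 0 s j = v j - t *: v K by rewrite addrAC.
under [X in _ <= _ + (_ + X)]eq_bigr do rewrite !shift.
lra.
Qed.

Lemma flat_middle_pair : (0 < K)%N ->
  unit_segment (normalize (v K.-1)) (- normalize (v K.+1)).
Proof.
move=> K0; have /fin_all_exists [lm lmP] : forall i : 'I_K, exists lm : R * R,
    [/\ 0 <= lm.1, 0 <= lm.2 & v K = lm.1 *: v (K - i.+1) + lm.2 *: v (K.+1 + i)].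
  by move=> i; have [p [q []]] := middle_in_cone i; exists (p, q).
pose T := \sum_i ((lm i).1 + (lm i).2).
have lmT i : (lm i).1 <= T /\ (lm i).2 <= T.
  have [l0 m0 _] := lmP i; have : (lm i).1 + (lm i).2 <= T.
    by rewrite /T (bigD1 i) //= lerDl sumr_ge0 // => j _; have [? ? _] := lmP j; apply: addr_ge0.
  lra.
have T0 : 0 <= T by have [l0 _ _] := lmP (Ordinal K0); have [] := lmT (Ordinal K0); lra.
pose t := (1 + T)^-1.
have t0 : 0 < t by rewrite invr_gt0; lra.
have t_lt1 (c : R) : c <= T -> t * c < 1 by move=> cT; rewrite mulrC ltr_pdivrMr; lra.
have t1 : t <= 1 by rewrite invf_le1; lra.
have pair_le (i : 'I_K) : N (v (K - i.+1) - t *: v K) + N (v (K.+1 + i) - t *: v K) <=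
                 N (v (K - i.+1)) + N (v (K.+1 + i)).
  have [l0 m0 vK] := lmP i; have [lT mT] := lmT i; rewrite vK.
  exact: pair_shift_le l0 m0 (ltW t0) (ltW (t_lt1 _ lT)) (ltW (t_lt1 _ mT)).
have t01 : 0 <= t <= 1 by rewrite (ltW t0) t1.
have := ler_sum_tight (Ordinal K0) pair_le (ft_pairs t01); rewrite /= ?addn0 ?subn1.
have [l0 m0 vK] := lmP (Ordinal K0); have [lT mT] := lmT (Ordinal K0).
rewrite /= ?addn0 ?subn1 in l0 m0 vK lT mT; rewrite vK => tight.
apply: pair_shift_unit_segment tight; rewrite ?t_lt1 ?dir_neq0 ?size_s //; try lia.
have vK0 : v K != 0 by apply: dir_neq0; rewrite size_s; lia.
rewrite lt_neqAle addr_ge0 // andbT eq_sym; apply: contra vK0 => /eqP lm0.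
have [l0' m0'] : (lm (Ordinal K0)).1 = 0 /\ (lm (Ordinal K0)).2 = 0 by lra.
by rewrite vK l0' m0' !scale0r addr0.
Qed.

Lemma separating_face : exists G, [/\ dual_unit G,
  forall j, (j < K)%N -> dotp G (v j) = N (v j)
  & forall j, (K < j < size s)%N -> dotp G (v j) = - N (v j)].
Proof.
have [K0|K0] := posnP K.
  have v0 : v 0 != 0 by apply: dir_neq0; rewrite size_s K0.
  have [G [GN G1]] := norming_functional (norm_normalize v0).
  exists G; split=> [|j|j]; rewrite ?size_s ?K0 //; last by move=> /andP [? ?]; exfalso; lia.
  by split=> //; exists (normalize (v 0)); rewrite norm_normalize.
have vl0 : v K.-1 != 0 by apply: dir_neq0; rewrite size_s; lia.
have vr0 : v K.+1 != 0 by apply: dir_neq0; rewrite size_s; lia.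
set p := - normalize (v K.+1); set q := normalize (v K.-1).
have seg : unit_segment p q by apply/unit_segment_sym/flat_middle_pair.
have Nl0 : 0 <= (N (v K.-1))^-1 by rewrite invr_ge0 norm_ge0.
have Nr0 : 0 <= (N (v K.+1))^-1 by rewrite invr_ge0 norm_ge0.
have crossp w : cross p w = (N (v K.+1))^-1 * cross w (v K.+1).
  by rewrite /p /normalize crossNl crossZl crossC mulrN opprK.
have crossq w : cross w q = (N (v K.-1))^-1 * cross w (v K.-1).
  by rewrite /q /normalize crossZr.
have lr : 0 < cross (v K.-1) (v K.+1).
  rewrite lt_neqAle dir_sorted ?size_s ?andbT; last lia.
  apply/eqP => /esym lr0.
  have fl : 0 < dotp f (v K.-1) by apply: dir_pos; rewrite size_s; lia.
  have fr : 0 < dotp f (v K.+1) by apply: dir_pos; rewrite size_s; lia.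
  have vrE := cross_eq0_parallel (lt0r_neq0 fl) lr0.
  have : p + q = 0 by rewrite /p /q vrE normalizeZ ?divr_gt0 // addNr.
  by case: seg => _ _ /[swap] ->; rewrite norm0 => /eqP; rewrite eq_sym pnatr_eq0.
have pq : 0 < cross p q.
  by rewrite crossp /q /normalize crossZl !mulr_gt0 ?invr_gt0 ?norm_gt0.
have [G [GN Gp Gcone]] := unit_segment_functional seg pq.
have [p1 _ _] := seg.
exists G; split=> [|j jK|j /andP [Kj js]].
- by split=> //; exists p; rewrite p1 Gp.
- apply/Gcone/in_cone_cross_ge0; rewrite // ?crossp ?crossq mulr_ge0 // dir_sorted ?size_s //; lia.
- rewrite -[v j]opprK dotpNr normN Gcone //.
  apply: in_cone_cross_ge0; rewrite // ?crossp ?crossq crossNl -crossC mulr_ge0 //.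
  all: by apply: dir_sorted; rewrite size_s; lia.
Qed.

End Directions.

Lemma dual_unit_face G : dual_unit G ->
  proper_exposed_face N (fun z => unit_ball N z /\ dotp G z = 1).
Proof.
move=> [GN [z [z1 Gz]]]; exists G, 1; split=> //; last by exists z.
- by apply: contra_eq_neq Gz => ->; rewrite dotpE !mxE !mul0r addr0 eq_sym oner_neq0.
- by move=> w w1; apply: le_trans (GN w) w1.
Qed.

Section HalvesOnFace.
Variables (x0 G : pt) (s : seq pt) (K : nat).
Local Notation v j := (x0 - nth 0 s j).
Local Notation xs := (@upper_half _ s K).
Local Notation ys := (@lower_half _ s K).
Hypothesis size_s : size s = (K.+1 + K)%N.
Hypothesis G_dual : dual_unit G.
Hypothesis G_lower : forall j, (j < K)%N -> dotp G (v j) = N (v j).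
Hypothesis G_upper : forall j, (K < j < size s)%N -> dotp G (v j) = - N (v j).

Lemma halves_on_face (i : 'I_K) :
  N (xs i - ys i) = N (x0 - xs i) + N (x0 - ys i) /\ dotp G (xs i - ys i) = N (xs i - ys i).
Proof.
have [GN _] := G_dual.
have iK := ltn_ord i.
have E : xs i - ys i = v i - v (K.+1 + i).
  by rewrite /upper_half /lower_half; apply: row2_eq; rewrite !mxE; ring.
have GE : dotp G (xs i - ys i) = N (x0 - xs i) + N (x0 - ys i).
  rewrite E dotpDr dotpNr G_lower // G_upper ?size_s; last lia.
  by rewrite opprK addrC.
suff NE : N (xs i - ys i) = N (x0 - xs i) + N (x0 - ys i) by rewrite GE NE.
apply/eqP; rewrite eq_le -{2}GE GN andbT E.
by apply: le_trans (normD_le _ _) _; rewrite normN addrC.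
Qed.

Lemma halves_double_cluster : uniq s -> double_cluster N xs ys.
Proof.
move=> us; split; first exact: uniq_cluster_halves.
exists (fun z => unit_ball N z /\ dotp G z = 1); split; first exact: dual_unit_face.
move=> i; have [NE GE] := halves_on_face i.
have i0 : xs i - ys i != 0.
  have iK := ltn_ord i.
  by rewrite subr_eq0 /upper_half /lower_half nth_uniq ?size_s //; lia.
split; first by rewrite /unit_ball norm_normalize.
by rewrite dotpZr GE mulVf ?gt_eqF ?norm_gt0.
Qed.

Lemma halves_FT : FT_point N (cluster_points xs ys) x0.
Proof.
move=> y; rewrite !big_cluster_points; apply: ler_sum => i _.
have [NE _] := halves_on_face i; rewrite -NE.
have -> : xs i - ys i = (y - ys i) - (y - xs i) by apply: row2_eq; rewrite !mxE; ring.
by apply: le_trans (normD_le _ _) _; rewrite normN addrC.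
Qed.

End HalvesOnFace.

End NormedPlane.

Theorem theorem4p6 (R : realType) (N : 'rV[R]_2 -> R) (k : nat)
    (A : seq 'rV[R]_2) (x0 : 'rV[R]_2) :
  is_norm N -> (0 < k)%N -> uniq A -> size A = (2 * k)%N -> x0 \in A ->
  FT_point N A x0 -> vertex_of_conv A x0 ->
  pseudo_double_cluster N A x0.
Proof.
move=> normP k0 uA sizeA x0A ftA vx.
have [f /sorted_directions [s [perm_s pos_s sorted_s]]] := vertex_half_plane uA vx.
have A_s : perm_eq A (x0 :: s).
  by apply: perm_trans (perm_to_rem x0A) _; rewrite perm_cons perm_sym.
have us : uniq s by move: uA; rewrite (perm_uniq A_s) => /andP [].
case: k k0 sizeA => // K _ sizeA.
have size_s : size s = (K.+1 + K)%N by have := perm_size A_s; rewrite sizeA /=; lia.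
have ft_s y : \sum_(a <- s) N (x0 - a) <= N (y - x0) + \sum_(a <- s) N (y - a).
  have := ftA y; rewrite (perm_big _ A_s) [X in _ <= X](perm_big _ A_s) !big_cons /=.
  by rewrite subrr (norm0 normP) add0r.
have [G [G_dual G_lower G_upper]] := separating_face normP size_s pos_s sorted_s ft_s.
exists K, (@upper_half _ s K), (@lower_half _ s K), (nth 0 s K); split.
- exact (halves_double_cluster normP size_s G_dual G_lower G_upper us).
- exact (halves_FT normP size_s G_dual G_lower G_upper).
- move=> z; rewrite (perm_mem A_s) inE (mem_cluster_halves size_s).
  split=> [/orP [/eqP -> | /orP [zc | /eqP ->]] | [zc | -> | ->]].
  + exact: Or32.
  + exact: Or31.
  + exact: Or33.
  + by rewrite zc orbT.
  + by rewrite eqxx.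
  + by rewrite eqxx !orbT.
Qed.
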